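(* Let $\mathcal{X}\in\mathbb{IR}^n$, $\mathcal{U}\in\mathbb{IR}^m$ be boxes, $N\in\mathbb{N}$, and let $c:\mathcal{X}\times\mathcal{U}\times\mathcal{X}\to\mathbb{R}$ be Lipschitz with constant $L_c$ with respect to the Euclidean norm on $\mathbb{R}^{n}\times\mathbb{R}^m\times\mathbb{R}^n$. Let $x^j\in\mathcal{X}$ be the known current state, and for each $q$ let $\Phi_q(x,u)=x(t_{q+1};x,u)\in\mathcal{X}$ denote the (unknown) true state at $t_{q+1}$ reached from state $x$ at $t_q$ under constant control $u$. Let $\mathcal{R}^j_{\mathcal{U}}=\{x^j\}$ and let $\mathcal{R}^{q+1}_{\mathcal{U}}\in\mathbb{IR}^n$, $q=j,\dots,j+N$, be over-approximations of the reachable set at $t_{q+1}$ from $\mathcal{R}^q_{\mathcal{U}}$ under all controls in $\mathcal{U}$, in the sense that for every $x\in\mathcal{R}^q_{\mathcal{U}}$ and $u\in\mathcal{U}$ both the true successor $\Phi_q(x,u)$ and the model's predicted successor $\hat h_q(x,u)$ lie in $\mathcal{R}^{q+1}_{\mathcal{U}}$, where $\hat h_q:\mathcal{X}\times\mathcal{U}\to\mathcal{X}$ is the one-step predictor picked inside the data-driven over-approximation of the reachable set. Let $$C_j^\star=\inf_{u^j,\dots,u^{j+N}\in\mathcal{U}}\sum_{q=j}^{j+N}c(x^q,u^q,x^{q+1}),\quad x^{q+1}=\Phi_q(x^q,u^q),$$ $$\hat C_j=\inf_{u^j,\dots,u^{j+N}\in\mathcal{U}}\sum_{q=j}^{j+N}c(\hat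 x^q,u^q,\hat x^{q+1}),\quad \hat x^j=x^j,\ \hat x^{q+1}=\hat h_q(\hat x^q,u^q).$$ Then $$|C_j^\star-\hat C_j|\le L_c\Big(\|\mathrm{wd}(\mathcal{R}^{j+N+1}_{\mathcal{U}})\|_2+\sum_{q=j+1}^{j+N}2\,\|\mathrm{wd}(\mathcal{R}^q_{\mathcal{U}})\|_2\Big).$$
   Context: $\mathbb{IR}^n$ denotes $n$-dimensional interval vectors (boxes). For an interval vector $\mathcal{A}=[\underline{\mathcal{A}},\overline{\mathcal{A}}]$, $\mathrm{wd}(\mathcal{A})=\overline{\mathcal{A}}-\underline{\mathcal{A}}\in\mathbb{R}^n$ is its componentwise width and $\|\cdot\|_2$ the Euclidean norm. The underlying system is $\dot x=f(x)+\sum_{p=1}^dg_p(x)u[\alpha^p]$ with unknown $f,g_p$, sampled at times $t_q=t_j+(q-j)\Delta t$, with control held constant on each $[t_q,t_{q+1}]$; the sets $\mathcal{R}^{q+1}_{\mathcal{U}}$ are computed by the data-driven interval Taylor over-approximation formula applied to the initial set $\mathcal{R}^q_{\mathcal{U}}$ with the control value replaced by the box $\mathcal{U}$. *)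

From HB Require Import structures.
From mathcomp Require Import all_boot all_order all_algebra.
From mathcomp Require Import classical_sets reals.
Set Implicit Arguments. Unset Strict Implicit. Unset Printing Implicit Defensive.
Import Order.TTheory GRing.Theory Num.Theory.
Local Open Scope ring_scope.

Record box (R : realType) (n : nat) := Box { blo : 'rV[R]_n ; bhi : 'rV[R]_n }.

Definition box_wf (R : realType) n (B : box R n) : Prop :=
  forall i : 'I_n, blo B 0 i <= bhi B 0 i.

Definition inbox (R : realType) n (B : box R n) (x : 'rV[R]_n) : Prop :=
  forall i : 'I_n, blo B 0 i <= x 0 i <= bhi B 0 i.

Definition wd (R : realType) n (B : box R n) : 'rV[R]_n := bhi B - blo B.

Definition enorm (R : realType) n (v : 'rV[R]_n) : R :=
  Num.sqrt (\sum_(i < n) v 0 i ^+ 2).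

(* Lipschitz continuity of c on X x U x X, w.r.t. the Euclidean norm on
   R^n x R^m x R^n (= R^(n+m+n), via concatenation of the row vectors). *)
Definition lipschitz_on (R : realType) n m (X : box R n) (U : box R m)
  (c : 'rV[R]_n -> 'rV[R]_m -> 'rV[R]_n -> R) (Lc : R) : Prop :=
  forall x x' y y' u u', inbox X x -> inbox X x' -> inbox X y -> inbox X y' ->
    inbox U u -> inbox U u' ->
    `|c x u y - c x' u' y'| <=
      Lc * enorm (row_mx (row_mx (x - x') (u - u')) (y - y')).

(* trajectory under the step maps h q (from time t_q to t_{q+1}), starting at
   time j at state x0 with control sequence u; [traj h j x0 u k] is the state
   at time t_(j+k). *)
Fixpoint traj (R : realType) n m (h : nat -> 'rV[R]_n -> 'rV[R]_m -> 'rV[R]_n)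
  (j : nat) (x0 : 'rV[R]_n) (u : nat -> 'rV[R]_m) (k : nat) : 'rV[R]_n :=
  match k with
  | 0 => x0
  | k'.+1 => h (j + k')%N (traj h j x0 u k') (u (j + k')%N)
  end.

Definition cost (R : realType) n m (c : 'rV[R]_n -> 'rV[R]_m -> 'rV[R]_n -> R)
  (h : nat -> 'rV[R]_n -> 'rV[R]_m -> 'rV[R]_n) (j N : nat) (x0 : 'rV[R]_n)
  (u : nat -> 'rV[R]_m) : R :=
  \sum_(k < N.+1) c (traj h j x0 u k) (u (j + k)%N) (traj h j x0 u k.+1).

Definition admissible (R : realType) m (U : box R m) (j N : nat)
  (u : nat -> 'rV[R]_m) : Prop :=
  forall k, (k <= N)%N -> inbox U (u (j + k)%N).

Definition opt_cost (R : realType) n m (U : box R m)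
  (c : 'rV[R]_n -> 'rV[R]_m -> 'rV[R]_n -> R)
  (h : nat -> 'rV[R]_n -> 'rV[R]_m -> 'rV[R]_n) (j N : nat) (x0 : 'rV[R]_n) : R :=
  inf [set cost c h j N x0 u | u in [set u | admissible U j N u]]%classic.

(** The true and predicted trajectories start at the same state x^j, and for
    q > j both lie in the box R^q_U, so |x^q - x̂^q| <= |wd(R^q_U)|.  The
    Lipschitz bound on stage q costs L_c (|x^q - x̂^q| + |x^{q+1} - x̂^{q+1}|),
    so over the horizon every intermediate box is counted twice and the
    terminal one once.  Since c is Lipschitz on a bounded set, both costs are
    bounded below, and the uniform bound passes to the infima. *)
From HB Require Import structures.
From mathcomp Require Import all_boot all_order all_algebra.
From mathcomp Require Import classical_sets reals.
From mathcomp Require Import lra zify.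
Set Implicit Arguments. Unset Strict Implicit. Unset Printing Implicit Defensive.
Import Order.TTheory GRing.Theory Num.Theory.
Local Open Scope ring_scope.

Section EuclideanNorm.
Variable R : realType.

Lemma enorm0 n : enorm (0 : 'rV[R]_n) = 0.
Proof. by rewrite /enorm big1 ?sqrtr0 // => i _; rewrite mxE expr0n. Qed.

Lemma enorm_le n (a b : 'rV[R]_n) :
  (forall i, `|a 0 i| <= b 0 i) -> enorm a <= enorm b.
Proof.
move=> le_ab; rewrite /enorm ler_sqrt; last first.
  by apply: sumr_ge0 => i _; exact: sqr_ge0.
apply: ler_sum => i _; have := le_ab i; rewrite ler_norml => /andP[? ?]; nra.
Qed.

Lemma enorm_row_mx n1 n2 (a : 'rV[R]_n1) (b : 'rV[R]_n2) :
  enorm (row_mx a b) <= enorm a + enorm b.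
Proof.
rewrite /enorm big_split_ord /=.
under eq_bigr => i _ do rewrite row_mxEl.
under [X in _ + X]eq_bigr => i _ do rewrite row_mxEr.
set sa := \sum_(i < n1) _; set sb := \sum_(i < n2) _.
have sa_ge0 : 0 <= sa by apply: sumr_ge0 => i _; exact: sqr_ge0.
have sb_ge0 : 0 <= sb by apply: sumr_ge0 => i _; exact: sqr_ge0.
have ra_ge0 := sqrtr_ge0 sa; have rb_ge0 := sqrtr_ge0 sb.
rewrite -(ger0_norm (addr_ge0 ra_ge0 rb_ge0)) -sqrtr_sqr ler_sqrt ?sqr_ge0 //.
rewrite sqrrD !sqr_sqrtr //; have := mulr_ge0 ra_ge0 rb_ge0; lra.
Qed.

Lemma enorm_row_mx3 n1 n2 n3
    (a : 'rV[R]_n1) (b : 'rV[R]_n2) (d : 'rV[R]_n3) :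
  enorm (row_mx (row_mx a b) d) <= enorm a + enorm b + enorm d.
Proof.
apply: le_trans (enorm_row_mx _ _) _.
by rewrite lerD2r; exact: enorm_row_mx.
Qed.

Lemma inbox_blo n (B : box R n) : box_wf B -> inbox B (blo B).
Proof. by move=> wfB i; rewrite lexx wfB. Qed.

Lemma enorm_sub_le_wd n (B : box R n) x y :
  inbox B x -> inbox B y -> enorm (x - y) <= enorm (wd B).
Proof.
move=> Bx By; apply: enorm_le => i; have := Bx i; have := By i; rewrite !mxE.
by move=> /andP[? ?] /andP[? ?]; rewrite ler_norml; apply/andP; split; lra.
Qed.

End EuclideanNorm.

Lemma inf_image_dist_le (R : realType) (T : Type) (P : set T) (f g : T -> R)
    (K : R) :
  (exists t, P t) ->
  has_lbound [set f t | t in P]%classic ->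
  has_lbound [set g t | t in P]%classic ->
  (forall t, P t -> `|f t - g t| <= K) ->
  `|inf [set f t | t in P]%classic - inf [set g t | t in P]%classic| <= K.
Proof.
move=> [t0 Pt0] lbf lbg le_fg.
have nef : ([set f t | t in P] !=set0)%classic by exists (f t0), t0.
have neg : ([set g t | t in P] !=set0)%classic by exists (g t0), t0.
rewrite ler_distl; apply/andP; split.
- apply: lb_le_inf => // _ [t Pt <-].
  have : inf [set g t | t in P]%classic <= g t by apply: ge_inf => //; exists t.
  by have := le_fg t Pt; rewrite ler_distl => /andP[? ?]; lra.
- rewrite -lerBlDr; apply: lb_le_inf => // _ [t Pt <-].
  have : inf [set f t | t in P]%classic <= f t by apply: ge_inf => //; exists t.
  by have := le_fg t Pt; rewrite ler_distl => /andP[? ?]; lra.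
Qed.

Lemma sum_consecutive_pairs (R : numDomainType) (N : nat) (e : nat -> R) :
  e 0%N = 0 ->
  \sum_(k < N.+1) (e k + e k.+1) = e N.+1 + \sum_(k < N) 2 * e k.+1.
Proof.
move=> e0; rewrite big_split big_ord_recl big_ord_recr /= e0 add0r.
by rewrite -mulr_sumr mulr_natl mulr2n (addrC _ (e N.+1)) addrCA.
Qed.

Lemma sum_nat_shift (R : nmodType) (j N : nat) (F : nat -> R) :
  \sum_(j.+1 <= q < (j + N).+1) F q = \sum_(k < N) F (j + k.+1)%N.
Proof.
rewrite -{1}[j.+1]add0n big_addn subSS addKn big_mkord.
by apply: eq_bigr => k _; rewrite !addnS addnC.
Qed.

Lemma traj_in_reach (R : realType) (n m : nat) (U : box R m)
    (h : nat -> 'rV[R]_n -> 'rV[R]_m -> 'rV[R]_n) (Rset : nat -> box R n)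
    (j N : nat) (x0 : 'rV[R]_n) (u : nat -> 'rV[R]_m) (k : nat) :
  (forall v, inbox U v -> inbox (Rset j.+1) (h j x0 v)) ->
  (forall q x v, (j < q <= j + N)%N -> inbox (Rset q) x -> inbox U v ->
     inbox (Rset q.+1) (h q x v)) ->
  admissible U j N u -> (0 < k <= N.+1)%N ->
  inbox (Rset (j + k)%N) (traj h j x0 u k).
Proof.
move=> reach0 reachS adm; elim: k => [|[|k] IHk] //= le_kN.
  by rewrite addn0 addn1; apply: reach0; rewrite -[j]addn0; exact: adm.
rewrite addnS; apply: reachS; [lia | apply: IHk; lia | apply: adm; lia].
Qed.

Section Trajectories.
Variables (R : realType) (n m : nat) (X : box R n) (U : box R m).
Variables (c : 'rV[R]_n -> 'rV[R]_m -> 'rV[R]_n -> R) (Lc : R).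
Hypotheses (wfX : box_wf X) (wfU : box_wf U).
Hypotheses (Lc_ge0 : 0 <= Lc) (c_lip : lipschitz_on X U c Lc).

Definition maps_into (h : nat -> 'rV[R]_n -> 'rV[R]_m -> 'rV[R]_n) : Prop :=
  forall q x u, inbox X x -> inbox U u -> inbox X (h q x u).

Lemma lipschitz_on_stage x x' y y' u :
  inbox X x -> inbox X x' -> inbox X y -> inbox X y' -> inbox U u ->
  `|c x u y - c x' u y'| <= Lc * (enorm (x - x') + enorm (y - y')).
Proof.
move=> Xx Xx' Xy Xy' Uu; apply: le_trans (c_lip Xx Xx' Xy Xy' Uu Uu) _.
apply: ler_wpM2l => //; apply: le_trans (enorm_row_mx3 _ _ _) _.
by rewrite subrr enorm0 addr0.
Qed.

Lemma lipschitz_on_lbound :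
  exists M, forall x u y, inbox X x -> inbox U u -> inbox X y -> M <= c x u y.
Proof.
have loX := inbox_blo wfX; have loU := inbox_blo wfU.
exists (c (blo X) (blo U) (blo X)
        - Lc * (enorm (wd X) + enorm (wd U) + enorm (wd X))) => x u y Xx Uu Xy.
have := c_lip Xx loX Xy loX Uu loU; rewrite ler_distl => /andP[lo_c _].
have : Lc * enorm (row_mx (row_mx (x - blo X) (u - blo U)) (y - blo X))
       <= Lc * (enorm (wd X) + enorm (wd U) + enorm (wd X)).
  apply: ler_wpM2l => //; apply: le_trans (enorm_row_mx3 _ _ _) _.
  by rewrite !lerD // enorm_sub_le_wd.
lra.
Qed.

Lemma traj_inbox h j N x0 u k :
  inbox X x0 -> maps_into h -> admissible U j N u -> (k <= N.+1)%N ->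
  inbox X (traj h j x0 u k).
Proof.
move=> x0X hX adm; elim: k => [|k IHk] le_kN //=.
by apply: hX; [exact: IHk (ltnW le_kN) | exact: adm].
Qed.

Lemma cost_lbound h j N x0 :
  inbox X x0 -> maps_into h ->
  has_lbound [set cost c h j N x0 u | u in [set u | admissible U j N u]]%classic.
Proof.
move=> x0X hX; have [M le_Mc] := lipschitz_on_lbound.
exists (\sum_(k < N.+1) M) => _ [u adm <-]; apply: ler_sum => k _.
have k_lt := ltn_ord k; apply: le_Mc.
- by apply: (traj_inbox x0X hX adm); lia.
- by apply: adm; lia.
- by apply: (traj_inbox x0X hX adm); lia.
Qed.

Lemma cost_dist_le h1 h2 j N x0 u :
  inbox X x0 -> maps_into h1 -> maps_into h2 -> admissible U j N u ->
  `|cost c h1 j N x0 u - cost c h2 j N x0 u| <=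
    Lc * \sum_(k < N.+1) (enorm (traj h1 j x0 u k - traj h2 j x0 u k)
                          + enorm (traj h1 j x0 u k.+1 - traj h2 j x0 u k.+1)).
Proof.
move=> x0X h1X h2X adm; rewrite /cost -sumrB mulr_sumr.
apply: le_trans (ler_norm_sum _ _ _) _; apply: ler_sum => k _.
have k_lt := ltn_ord k.
have traj1 i : (i <= N.+1)%N -> inbox X (traj h1 j x0 u i) by exact: traj_inbox.
have traj2 i : (i <= N.+1)%N -> inbox X (traj h2 j x0 u i) by exact: traj_inbox.
by apply: lipschitz_on_stage;
  [apply: traj1 | apply: traj2 | apply: traj1 | apply: traj2 | apply: adm]; lia.
Qed.

End Trajectories.

Theorem theorem3 (R : realType) (n m N j : nat) (X : box R n) (U : box R m)
  (c : 'rV[R]_n -> 'rV[R]_m -> 'rV[R]_n -> R) (Lc : R)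
  (Phi hhat : nat -> 'rV[R]_n -> 'rV[R]_m -> 'rV[R]_n)
  (Rset : nat -> box R n) (xj : 'rV[R]_n) :
  box_wf X -> box_wf U ->
  0 <= Lc -> lipschitz_on X U c Lc ->
  inbox X xj ->
  (* true dynamics and one-step predictor map X x U into X *)
  (forall q x u, inbox X x -> inbox U u -> inbox X (Phi q x u)) ->
  (forall q x u, inbox X x -> inbox U u -> inbox X (hhat q x u)) ->
  (* R^{q}_U, q = j+1..j+N+1, are boxes in IR^n *)
  (forall q, (j < q <= j + N.+1)%N -> box_wf (Rset q)) ->
  (* over-approximation from R^j_U = {x^j} *)
  (forall u, inbox U u ->
     inbox (Rset j.+1) (Phi j xj u) /\ inbox (Rset j.+1) (hhat j xj u)) ->
  (* over-approximation from R^q_U, q = j+1..j+N *)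
  (forall q x u, (j < q <= j + N)%N -> inbox (Rset q) x -> inbox U u ->
     inbox (Rset q.+1) (Phi q x u) /\ inbox (Rset q.+1) (hhat q x u)) ->
  `| opt_cost U c Phi j N xj - opt_cost U c hhat j N xj | <=
    Lc * (enorm (wd (Rset (j + N).+1))
          + \sum_(j.+1 <= q < (j + N).+1) 2 * enorm (wd (Rset q))).
Proof.
(* Any two points of a box differ by at most its width, well-formed or not. *)
move=> wfX wfU Lc_ge0 c_lip xjX PhiX hhatX _ reach0 reachS.
apply: inf_image_dist_le; first by exists (fun=> blo U) => k _; exact: inbox_blo.
- exact: (cost_lbound wfX wfU Lc_ge0 c_lip j N xjX PhiX).
- exact: (cost_lbound wfX wfU Lc_ge0 c_lip j N xjX hhatX).
move=> u adm.
apply: le_trans (cost_dist_le Lc_ge0 c_lip xjX PhiX hhatX adm) _.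
set e := fun k => enorm (traj Phi j xj u k - traj hhat j xj u k).
have e_le_wd k : (0 < k <= N.+1)%N -> e k <= enorm (wd (Rset (j + k)%N)).
  move=> k_range; apply: enorm_sub_le_wd;
    apply: (traj_in_reach _ _ adm k_range)
      => [v /reach0[] // | q x v q_range /(reachS q x v q_range) Rx /Rx[] //].
rewrite (sum_consecutive_pairs N (e := e)); last by rewrite /e /= subrr enorm0.
rewrite sum_nat_shift -addnS; apply: ler_wpM2l => //; apply: lerD.
  by apply: e_le_wd; lia.
apply: ler_sum => k _; rewrite ler_pM2l // e_le_wd //.
by have := ltn_ord k; lia.
Qed.
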